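(* Let $I\subseteq\mathbb{R}$ be a closed, non-degenerate (possibly unbounded) interval and let $\mu$ be a continuous Borel probability measure on $\mathbb{R}$. Then $$1-\mu(I)=\inf\{d_{Ku}(\mu,\vartheta) : \vartheta\in P_c(\mathbb{R}),\ S_\vartheta\subseteq I\}.$$ Furthermore, if $\mu\in P_{ac}(\mathbb{R})$, then $$1-\mu(I)=\inf\{d_{Ku}(\mu,\vartheta) : \vartheta\in P_{ac}(\mathbb{R}),\ S_\vartheta\subseteq I\}.$$
   Context: $P_c(\mathbb{R})$ denotes the continuous (atomless) Borel probability measures on $\mathbb{R}$ and $P_{ac}(\mathbb{R})$ those absolutely continuous with respect to Lebesgue measure. $S_\vartheta$ is the closed support of $\vartheta$ (smallest closed set of full measure). The Kuiper distance is $d_{Ku}(\mu,\nu)=\sup\{|\mu(J)-\nu(J)| : J\text{ a non-degenerate interval of }\mathbb{R}\}$, equivalently $\sup_t(f_\mu(t)-f_\nu(t))+\sup_t(f_\nu(t)-f_\mu(t))$ with $f_\mu(t)=\mu((-\infty,t])$. *)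

From HB Require Import structures.
From mathcomp Require Import all_boot all_order all_algebra.
From mathcomp Require Import all_classical all_reals all_analysis.
Set Implicit Arguments. Unset Strict Implicit. Unset Printing Implicit Defensive.
Import Order.TTheory GRing.Theory Num.Theory.
Import numFieldNormedType.Exports.
Local Open Scope classical_set_scope.
Local Open Scope ring_scope.

(* Borel probability measures on R: [probability R R] with the canonical
   (Borel) measurable structure of R. *)

Definition atomless (R : realType) (mu : probability R R) : Prop :=
  forall x : R, mu [set x] = 0%E.

Definition abs_cont (R : realType) (mu : probability R R) : Prop :=
  mu `<< (@lebesgue_measure R).

Definition msupport (R : realType) (mu : probability R R) : set R :=
  \bigcap_(C in [set C : set R | closed C /\ measurable C /\ mu C = 1%E]) C.

Definition nondeg_interval (R : realType) (J : set R) : Prop :=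
  (exists i : interval R, J = [set` i]) /\
  exists x y : R, [/\ J x, J y & x < y].

Definition dKu (R : realType) (mu nu : probability R R) : \bar R :=
  ereal_sup [set `|(mu J - nu J)%E|%E | J in [set J : set R | nondeg_interval J]].

From HB Require Import structures.
From mathcomp Require Import all_boot all_order all_algebra.
From mathcomp Require Import all_classical all_reals all_analysis.
From mathcomp Require Import measurable_realfun lra.
Set Implicit Arguments.
Unset Strict Implicit.
Unset Printing Implicit Defensive.
Import Order.TTheory GRing.Theory Num.Theory.
Import numFieldNormedType.Exports.
Local Open Scope classical_set_scope.
Local Open Scope ring_scope.

(* If the support of th lies in the closed interval I, then th I = 1, since the
   complement of the support is covered by countably many null rational balls;
   the interval I alone then shows d_Ku(mu, th) >= |mu I - th I| = 1 - mu I.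
   The bound is attained by th = mu|_I + (1 - mu I) U with U uniform on some
   [a, b] inside I: for every interval J,
     mu J - th J = mu (J \ I) - (1 - mu I) U J
   is a difference of two numbers in [0, 1 - mu I].  This th is atomless,
   resp. absolutely continuous, as soon as mu is. *)

Lemma locally_null_negligible (R : realType) (mu : {measure set R -> \bar R})
    (A : set R) :
  (forall x, A x -> exists2 U, open U /\ U x & mu U = 0%E) -> mu.-negligible A.
Proof.
move=> Anull.
pose B (p : rat * rat) : set R := ball (ratr p.1 : R) (ratr p.2).
pose F (k : nat) : set R :=
  if @unpickle (rat * rat)%type k is Some p then
    if mu (B p) == 0%E then B p else set0
  else set0.
have mB p : measurable (B p) by apply: open_measurable; exact: ball_open.
have FN : mu.-negligible (\bigcup_k F k).
  apply: negligible_bigcup => k; rewrite /F.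
  case: unpickle => [p|]; last exact: negligible_set0.
  case: eqP => [Bp0|_]; last exact: negligible_set0.
  by exists (B p); split.
apply: negligibleS FN => x Ax.
have [U [oU Ux] muU] := Anull x Ax.
have [c [r [Bx BU]]] := open_subball_rat oU (mem_set Ux).
have muB : mu (B (c, r)) = 0%E.
  apply/eqP; rewrite -measure_le0 -muU.
  by apply: le_measure; rewrite ?inE//; exact: open_measurable.
exists (pickle (c, r)); first by [].
by rewrite /F pickleK muB eqxx; exact: set_mem.
Qed.

Section support.
Variables (R : realType) (th : probability R R).

Lemma msupport_compl_negligible : th.-negligible (~` msupport th).
Proof.
apply: locally_null_negligible => x /existsNP[C /not_implyP[[cC [mC thC]] nCx]].
exists (~` C); first by split; [exact/closed_openC|].
by have := probability_setC th mC; rewrite thC subee.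
Qed.

Lemma msupport_sub_full (A : set R) :
  measurable A -> msupport th `<=` A -> th A = 1%E.
Proof.
move=> mA sA; have thAC : th (~` A) = 0%E.
  apply: measure_negligible; first exact: measurableC.
  exact: negligibleS (subsetC sA) msupport_compl_negligible.
by rewrite -[A]setCK probability_setC ?thAC ?sube0//; exact: measurableC.
Qed.

Lemma msupport_sub_closed (A : set R) :
  closed A -> th A = 1%E -> msupport th `<=` A.
Proof.
by move=> cA thA x; apply; split; [|split] => //; exact: closed_measurable.
Qed.

End support.

Section kuiper.
Variables (R : realType) (mu th : probability R R).

Lemma dKu_ge (J : set R) :
  nondeg_interval J -> (`|mu J - th J| <= dKu mu th)%E.
Proof. by move=> ndJ; apply: ereal_sup_ubound; exists J. Qed.

Lemma dKu_le (k : \bar R) :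
    (forall J, nondeg_interval J -> measurable J -> (`|mu J - th J| <= k)%E) ->
  (dKu mu th <= k)%E.
Proof.
move=> muthk; apply: ge_ereal_sup => _ [J ndJ <-].
by apply: muthk => //; case: ndJ => -[i ->] _; exact: measurable_itv.
Qed.

Lemma compl_le_dKu (I : set R) :
  nondeg_interval I -> th I = 1%E -> (1 - mu I <= dKu mu th)%E.
Proof.
move=> ndI thI; apply: le_trans (dKu_ge ndI); rewrite thI -abseN.
case: (mu I) => [r||] /=; rewrite ?leey ?leNye //.
by rewrite -EFinD lee_fin opprB addrC ler_norm.
Qed.

End kuiper.

Lemma lee_abs_sub_bounded (R : realDomainType) (u v k : \bar R) :
  (0 <= u <= k)%E -> (0 <= v <= k)%E -> (`|u - v| <= k)%E.
Proof.
move=> /andP[u0 uk] /andP[v0 vk].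
case: k uk vk => [k| |] uk vk; [|by rewrite leey|by case: u u0 uk].
case: u u0 uk => [u| |] // u0 uk; case: v v0 vk => [v| |] // v0 vk.
by move: u0 uk v0 vk; rewrite !lee_fin ler_norml => *; apply/andP; split; lra.
Qed.

Section mixture.
Variables (R : realType) (mu nu : probability R R) (I : set R).
Hypotheses (mI : measurable I) (nuI : nu I = 1%E).

Let w : {nonneg R} := NngNum (fine_ge0 (measure_ge0 mu (~` I))).

Let wE : ((w%:num)%:E = 1 - mu I)%E.
Proof.
have mIC : measurable (~` I) by exact: measurableC.
by rewrite fineK ?fin_num_measure//; exact: probability_setC.
Qed.

Let mixture0 := measure_add (mrestr mu mI) (mscale w nu).

Definition mixture : set R -> \bar R := mixture0.

HB.instance Definition _ := isMeasure.Build _ _ _ mixture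
  (measure0 mixture0) (measure_ge0 mixture0)
  (@measure_semi_sigma_additive _ _ _ mixture0).

Lemma mixtureE A : mixture A = (mu (A `&` I) + (1 - mu I) * nu A)%E.
Proof. by rewrite /mixture /mixture0 measure_addE -wE. Qed.

Let mixtureT : mixture setT = 1%E.
Proof.
by rewrite mixtureE setTI probability_setT mule1 addeC subeK ?fin_num_measure.
Qed.

HB.instance Definition _ := Measure_isProbability.Build _ _ _ mixture mixtureT.

Lemma mixtureI : mixture I = 1%E.
Proof. by rewrite mixtureE setIid nuI mule1 addeC subeK ?fin_num_measure. Qed.

Lemma mixture_dist J : measurable J -> (`|mu J - mixture J| <= 1 - mu I)%E.
Proof.
move=> mJ; have mJI : measurable (J `&` I) by exact: measurableI.
rewrite mixtureE (measureDI mu mJ mI) [mu (J `&` I) + _]addeC.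
rewrite fin_num_oppeD ?fin_num_measure// addeA addeAC addeK ?fin_num_measure//.
apply: lee_abs_sub_bounded; apply/andP; split.
- exact: measure_ge0.
- rewrite -(probability_setC mu mI); apply: le_measure; rewrite ?inE//.
  + exact: measurableD.
  + exact: measurableC.
- by rewrite -wE; apply: mule_ge0.
- rewrite -wE -[leRHS]mule1; apply: lee_wpmul2l => //.
  exact: probability_le1.
Qed.

Lemma mixture_atomless : atomless mu -> atomless nu -> atomless mixture.
Proof.
move=> mu0 nu0 z; change (mixture [set z] = 0%E).
rewrite mixtureE nu0 mule0 adde0.
apply/eqP; rewrite -measure_le0 -(mu0 z).
by apply: le_measure; rewrite ?inE//; exact: measurableI.
Qed.

Lemma mixture_abs_cont : abs_cont mu -> abs_cont nu -> abs_cont mixture.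
Proof.
move=> /null_content_dominatesP mu_ac /null_content_dominatesP nu_ac.
apply/null_content_dominatesP => A mA A0; change (mixture A = 0%E).
rewrite mixtureE nu_ac// mule0 adde0; apply: mu_ac; first exact: measurableI.
apply/eqP; rewrite -measure_le0 -A0.
by apply: le_measure; rewrite ?inE//; exact: measurableI.
Qed.

End mixture.

Lemma abs_cont_atomless (R : realType) (th : probability R R) :
  abs_cont th -> atomless th.
Proof.
move=> /null_content_dominatesP th_ac z.
by apply: th_ac => //; exact: lebesgue_measure_set1.
Qed.

Section uniform.
Variables (R : realType) (a b : R) (ab : a < b).

(* [uniform_prob] is a measure on the Lebesgue-Stieltjes copy of R; [uniformR]
   is the same measure on the Borel structure of R used by [probability R R]. *)
Definition uniformR : set R -> \bar R := uniform_prob ab.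

HB.instance Definition _ := isMeasure.Build _ _ _ uniformR
  (measure0 (uniform_prob ab)) (measure_ge0 (uniform_prob ab))
  (@measure_semi_sigma_additive _ _ _ (uniform_prob ab)).

HB.instance Definition _ := Measure_isProbability.Build _ _ _ uniformR
  (probability_setT (uniform_prob ab)).

Lemma uniformR_abs_cont : abs_cont uniformR.
Proof. exact: dominates_uniform_prob. Qed.

Lemma uniformR_full (A : set R) : `[a, b] `<=` A -> uniformR A = 1%E.
Proof. exact: integral_uniform_pdf1. Qed.

End uniform.

Lemma nondeg_interval_sub_itv (R : realType) (I : set R) :
  nondeg_interval I -> exists a b, a < b /\ `[a, b] `<=` I.
Proof.
move=> [[i ->] [a [b [ia ib ab]]]]; exists a, b; split => // z.
by rewrite /= in_itv /=; exact: (interval_is_interval ia ib).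
Qed.

Lemma ereal_inf_dKu_msupport (R : realType) (I : set R)
    (mu th : probability R R) (P : probability R R -> Prop) :
  nondeg_interval I -> measurable I ->
  P th -> msupport th `<=` I -> (dKu mu th <= 1 - mu I)%E ->
  (1 - mu I)%E =
    ereal_inf [set dKu mu t | t in [set t | P t /\ msupport t `<=` I]].
Proof.
move=> ndI mI Pth thI th_dist; apply/eqP; rewrite eq_le; apply/andP; split.
  apply: le_ereal_inf_tmp => _ [t [_ tI] <-].
  exact: compl_le_dKu ndI (msupport_sub_full mI tI).
by apply: ge_ereal_inf; exists (dKu mu th) => //; exists th.
Qed.

Theorem lemma2p4 (R : realType) (I : set R) (mu : probability R R) :
  closed I -> nondeg_interval I -> atomless mu ->
  ((1 - mu I)%E =
     ereal_inf [set dKu mu th | th in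
       [set th : probability R R | atomless th /\ msupport th `<=` I]])
  /\
  (abs_cont mu ->
   (1 - mu I)%E =
     ereal_inf [set dKu mu th | th in
       [set th : probability R R | abs_cont th /\ msupport th `<=` I]]).
Proof.
move=> cI ndI mu_atomless; have mI := closed_measurable cI.
have [a [b [ab abI]]] := nondeg_interval_sub_itv ndI.
pose th := mixture mu (uniformR ab) mI.
have thI : th I = 1%E by apply: mixtureI; exact: uniformR_full.
have th_supp : msupport th `<=` I by exact: msupport_sub_closed.
have th_dist : (dKu mu th <= 1 - mu I)%E.
  by apply: dKu_le => J _ mJ; exact: mixture_dist.
split; [|move=> mu_ac]; apply: (ereal_inf_dKu_msupport (th := th)) => //.
  apply: mixture_atomless => //.
  exact/abs_cont_atomless/uniformR_abs_cont.
by apply: mixture_abs_cont => //; exact: uniformR_abs_cont.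
Qed.
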